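(* Work in the real projective plane. Let $ABC$ be a triangle and let $\psi$ denote isogonal conjugation with respect to $ABC$. Let $l_1, l_2$ be two lines, and let $\mathcal{C}_1 = \psi(l_1)$, $\mathcal{C}_2 = \psi(l_2)$ be the circumconics of $ABC$ obtained as their images. Let $X, Y$ be two points on $l_1$ and put $X' = \psi(X)$, $Y' = \psi(Y)$. If $X$ and $Y$ are conjugate with respect to $\mathcal{C}_2$, then the line $X'Y'$ passes through the pole of $l_2$ with respect to $\mathcal{C}_1$.
   Context: Under isogonal conjugation with respect to a triangle, a line is transformed into a conic through the three vertices (a circumconic) and vice versa. Two points $U, V$ are conjugate with respect to a conic $\mathcal{C}$ if the polar of $U$ with respect to $\mathcal{C}$ passes through $V$ (equivalently, the polar of $V$ passes through $U$). *)

From HB Require Import structures.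
From mathcomp Require Import all_boot all_order all_algebra.
Set Implicit Arguments. Unset Strict Implicit. Unset Printing Implicit Defensive.
Import Order.TTheory GRing.Theory Num.Theory.
Local Open Scope ring_scope.

(* Model: the real projective plane P^2(R) as the projective completion of the
   Euclidean plane R^2.  Points are nonzero column vectors 'cV[R]_3 (homogeneous
   coordinates, up to nonzero scaling), lines are nonzero row vectors 'rV[R]_3;
   the affine point (x,y) has homogeneous coordinates (x:y:1). *)

Section Defs.
Variable R : realFieldType.

Definition hom (P : R * R) : 'cV[R]_3 :=
  \col_(i < 3) nth 0 [:: P.1; P.2; 1] i.

Definition sqdist (P Q : R * R) : R := (P.1 - Q.1) ^+ 2 + (P.2 - Q.2) ^+ 2.

Definition tri_mx (A B C : R * R) : 'M[R]_3 :=
  \matrix_(i < 3, j < 3) (nth (hom A) [:: hom A; hom B; hom C] j) i 0.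

Definition is_triangle (A B C : R * R) : Prop := \det (tri_mx A B C) != 0.

Definition on_line (X : 'cV[R]_3) (l : 'rV[R]_3) : Prop := (l *m X) 0 0 = 0.

(* homogeneous barycentric coordinates (u:v:w) of X w.r.t. ABC:
   X = u A + v B + w C *)
Definition bary (A B C : R * R) (X : 'cV[R]_3) : 'cV[R]_3 :=
  invmx (tri_mx A B C) *m X.

(* Isogonal conjugation psi w.r.t. ABC, in its standard barycentric form
   (u:v:w) |-> (a^2 v w : b^2 w u : c^2 u v), a = BC, b = CA, c = AB.
   [isog A B C X] is a homogeneous representative of psi(X); psi(X) is
   defined exactly when this vector is nonzero. *)
Definition isog (A B C : R * R) (X : 'cV[R]_3) : 'cV[R]_3 :=
  let u := bary A B C X 0 0 in
  let v := bary A B C X 1 0 in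
  let w := bary A B C X 2%:R 0 in
  tri_mx A B C *m
    \col_(i < 3) nth 0 [:: sqdist B C * v * w;
                           sqdist C A * w * u;
                           sqdist A B * u * v] i.

(* A conic is given by a quadratic form on homogeneous coordinates. *)
Definition qform := 'cV[R]_3 -> R.

(* The circumconic psi(l): the locus of points X with psi(X) on l, i.e. the
   zero set of the quadratic form X |-> l . isog X. *)
Definition circumconic (A B C : R * R) (l : 'rV[R]_3) : qform :=
  fun X => (l *m isog A B C X) 0 0.

(* (twice) the symmetric bilinear form associated with the conic;
   the polar of U is the line {V | polar_form q U V = 0}. *)
Definition polar_form (q : qform) (U V : 'cV[R]_3) : R :=
  q (U + V) - q U - q V.

Definition conic_conjugate (q : qform) (U V : 'cV[R]_3) : Prop := polar_form q U V = 0.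

Definition conic_nondeg (q : qform) : Prop :=
  forall U, (forall V, polar_form q U V = 0) -> U = 0.

Definition is_pole_wrt (q : qform) (l : 'rV[R]_3) (P : 'cV[R]_3) : Prop :=
  P != 0 /\ exists k : R, k != 0 /\ forall V, polar_form q P V = k * (l *m V) 0 0.

Definition pcollinear3 (U V W : 'cV[R]_3) : Prop :=
  \det (\matrix_(i < 3, j < 3) (nth U [:: U; V; W] j) i 0) = 0.

End Defs.

(* In barycentric coordinates x, y, p of X, Y, P the conjugation is
   psi(z) = (a z1 z2, b z2 z0, c z0 z1), the circumconic psi(l) is z |-> m.psi(z)
   (m = l in barycentrics) and its polar form is m.G(z, w), G the polarization
   of psi.  Conjugacy of X, Y w.r.t. psi(l2) says that the point G(x, y) lies
   on l2, the polar of P w.r.t. psi(l1), so m.G(p, G(x, y)) = 0.  Since x and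
   y lie on m this reduces to sum_i m_i w_i x_i y_i p_i = 0 with
   w = (bc, ca, ab).  On the other hand det [psi(x), psi(y), p] equals
   -sum_i w_i x_i y_i p_i (x * y)_i, and the cross product x * y is
   proportional to m, so the determinant vanishes. *)

From HB Require Import structures.
From mathcomp Require Import all_boot all_order all_algebra ring.
Import Order.TTheory GRing.Theory Num.Theory.
Set Implicit Arguments. Unset Strict Implicit.
Local Open Scope ring_scope.

Section JoinMeet.
Variable R : comPzRingType.
Implicit Types (u v w : 'cV[R]_3) (l m : 'rV[R]_3).

Lemma mulmx_rowcol3 l v :
  (l *m v) 0 0 = l 0 0 * v 0 0 + l 0 1 * v 1 0 + l 0 2 * v 2 0.
Proof.
rewrite mxE !big_ord_recl big_ord0 addr0 addrA.
by congr (_ + _ * _ + _ * _); congr (_ _ _); apply/val_inj.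
Qed.

Lemma col3P u v : u 0 0 = v 0 0 -> u 1 0 = v 1 0 -> u 2 0 = v 2 0 -> u = v.
Proof.
move=> e0 e1 e2; apply/colP => -[[|[|[|//]]] i3]; [move: e0 | move: e1 | move: e2];
  by congr (u _ _ = v _ _); apply/val_inj.
Qed.

Lemma row3P l m : l 0 0 = m 0 0 -> l 0 1 = m 0 1 -> l 0 2 = m 0 2 -> l = m.
Proof.
move=> e0 e1 e2; apply/rowP => -[[|[|[|//]]] j3]; [move: e0 | move: e1 | move: e2];
  by congr (l _ _ = m _ _); apply/val_inj.
Qed.

Definition join u v : 'rV[R]_3 :=
  \row_(j < 3) nth 0 [:: u 1 0 * v 2 0 - u 2 0 * v 1 0;
                         u 2 0 * v 0 0 - u 0 0 * v 2 0;
                         u 0 0 * v 1 0 - u 1 0 * v 0 0] j.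

Definition meet l m : 'cV[R]_3 :=
  \col_(i < 3) nth 0 [:: l 0 1 * m 0 2 - l 0 2 * m 0 1;
                         l 0 2 * m 0 0 - l 0 0 * m 0 2;
                         l 0 0 * m 0 1 - l 0 1 * m 0 0] i.

Lemma join0u v : join 0 v = 0.
Proof. by apply: row3P; rewrite !mxE /= !mul0r subrr. Qed.

Lemma meet_join m u v : meet m (join u v) = (m *m v) 0 0 *: u - (m *m u) 0 0 *: v.
Proof. by apply: col3P; rewrite !mulmx_rowcol3 !mxE /=; ring. Qed.

Lemma join_meet l m w : join (meet l m) w = (l *m w) 0 0 *: m - (m *m w) 0 0 *: l.
Proof. by apply: row3P; rewrite !mulmx_rowcol3 !mxE /=; ring. Qed.

Lemma det_mx33 (M : 'M[R]_3) : \det M =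
  M 0 0 * (M 1 1 * M 2 2 - M 1 2 * M 2 1)
  - M 0 1 * (M 1 0 * M 2 2 - M 1 2 * M 2 0)
  + M 0 2 * (M 1 0 * M 2 1 - M 1 1 * M 2 0).
Proof.
(* Indexing by nat lets [/=] compute the lifted indices of the cofactors. *)
pose N (i j : nat) := M (inord i) (inord j).
have -> : M = \matrix_(i, j) N i j by apply/matrixP => i j; rewrite mxE /N !inord_val.
rewrite (expand_det_row _ 0) !big_ord_recl big_ord0 /cofactor.
rewrite !(expand_det_row _ 0) !big_ord_recl !big_ord0 /cofactor !det_mx11 !mxE /=.
by rewrite /bump /= (_ : 1 %% 3 = 1)%N // (_ : (1 + 1) %% 3 = 2)%N //; ring.
Qed.

Definition col3mx u v w : 'M[R]_3 := \matrix_(i < 3, j < 3) (nth u [:: u; v; w] j) i 0.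

Lemma det_col3mx u v w : \det (col3mx u v w) = (join u v *m w) 0 0.
Proof. by rewrite det_mx33 mulmx_rowcol3 !mxE /=; ring. Qed.

Lemma col3mx_mulmx (T : 'M[R]_3) u v w :
  col3mx (T *m u) (T *m v) (T *m w) = T *m col3mx u v w.
Proof.
apply/matrixP => i -[[|[|[|//]]] j3]; rewrite !mxE /=;
  by apply: eq_bigr => k _; rewrite !mxE.
Qed.

End JoinMeet.

Section ProjectivePlane.
Variable R : realFieldType.
Implicit Types u v w : 'cV[R]_3.

Lemma pcollinear3_join u v w : pcollinear3 u v w <-> (join u v *m w) 0 0 = 0.
Proof. by rewrite -det_col3mx. Qed.

Lemma pcollinear3_mulmx (T : 'M[R]_3) u v w :
  pcollinear3 u v w -> pcollinear3 (T *m u) (T *m v) (T *m w).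
Proof.
change (\det (col3mx u v w) = 0 -> \det (col3mx (T *m u) (T *m v) (T *m w)) = 0).
by rewrite col3mx_mulmx det_mulmx => ->; rewrite mulr0.
Qed.

Lemma pole_conjugate (q : qform R) l P Q :
  is_pole_wrt q l P -> on_line Q l -> conic_conjugate q P Q.
Proof. by move=> [_ [k [_ polarP]]] Ql; rewrite /conic_conjugate polarP Ql mulr0. Qed.

End ProjectivePlane.

Section IsogonalBarycentric.
Variables (R : comPzRingType) (a b c : R).
Implicit Types (m : 'rV[R]_3) (x y z w p : 'cV[R]_3).

Definition isog_bary z : 'cV[R]_3 :=
  \col_(i < 3) nth 0 [:: a * z 1 0 * z 2 0;
                         b * z 2 0 * z 0 0;
                         c * z 0 0 * z 1 0] i.

Definition isog_polar z w : 'cV[R]_3 :=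
  \col_(i < 3) nth 0 [:: a * (z 1 0 * w 2 0 + z 2 0 * w 1 0);
                         b * (z 2 0 * w 0 0 + z 0 0 * w 2 0);
                         c * (z 0 0 * w 1 0 + z 1 0 * w 0 0)] i.

Definition isog_trilin x y p : 'cV[R]_3 :=
  \col_(i < 3) nth 0 [:: b * c * x 0 0 * y 0 0 * p 0 0;
                         c * a * x 1 0 * y 1 0 * p 1 0;
                         a * b * x 2 0 * y 2 0 * p 2 0] i.

Lemma isog_baryD z w : isog_bary (z + w) = isog_bary z + isog_bary w + isog_polar z w.
Proof. by apply: col3P; rewrite !mxE /=; ring. Qed.

Lemma join_isog_bary x y p :
  (join (isog_bary x) (isog_bary y) *m p) 0 0 = - (join x y *m isog_trilin x y p) 0 0.
Proof. by rewrite !mulmx_rowcol3 !mxE /=; ring. Qed.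

Lemma isog_polar_polar m x y p : (m *m x) 0 0 = 0 -> (m *m y) 0 0 = 0 ->
  (m *m isog_polar p (isog_polar x y)) 0 0 = - 2 * (m *m isog_trilin x y p) 0 0.
Proof.
move=> mx my; transitivity (
    (m *m x) 0 0 * (b * c * y 0 0 * p 0 0 + c * a * y 1 0 * p 1 0 + a * b * y 2 0 * p 2 0)
  + (m *m y) 0 0 * (b * c * x 0 0 * p 0 0 + c * a * x 1 0 * p 1 0 + a * b * x 2 0 * p 2 0)
  - 2 * (m *m isog_trilin x y p) 0 0).
  by rewrite !mulmx_rowcol3 !mxE /=; ring.
by rewrite mx my; ring.
Qed.

End IsogonalBarycentric.

Lemma join_isog_bary_eq0 (R : idomainType) (a b c : R) (m : 'rV[R]_3) (x y p : 'cV[R]_3) :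
  2 != 0 :> R -> m != 0 -> (m *m x) 0 0 = 0 -> (m *m y) 0 0 = 0 ->
  (m *m isog_polar a b c p (isog_polar a b c x y)) 0 0 = 0 ->
  (join (isog_bary a b c x) (isog_bary a b c y) *m p) 0 0 = 0.
Proof.
move=> two_neq0 m_neq0 mx my mpp; set h := isog_trilin a b c x y p.
have mh : (m *m h) 0 0 = 0.
  apply/eqP; move/eqP: mpp; rewrite isog_polar_polar // mulf_eq0 oppr_eq0.
  by rewrite (negbTE two_neq0).
have meet0 : meet m (join x y) = 0 by rewrite meet_join mx my !scale0r subrr.
have : (join x y *m h) 0 0 *: m = 0.
  have := join_meet m (join x y) h.
  by rewrite meet0 join0u mh scale0r sub0r => /esym/eqP; rewrite oppr_eq0 => /eqP.
rewrite join_isog_bary => /eqP; rewrite scalemx_eq0 (negbTE m_neq0) orbF => /eqP ->.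
exact: oppr0.
Qed.

Section Triangle.
Variables (R : realFieldType) (A B C : R * R).
Hypothesis ABC : is_triangle A B C.

Local Notation T := (tri_mx A B C).
Local Notation psi := (isog_bary (sqdist B C) (sqdist C A) (sqdist A B)).
Local Notation psi_polar := (isog_polar (sqdist B C) (sqdist C A) (sqdist A B)).

Lemma isogE X : isog A B C X = T *m psi (bary A B C X).
Proof. by []. Qed.

Lemma polar_form_circumconic l U V :
  polar_form (circumconic A B C l) U V =
  ((l *m T) *m psi_polar (bary A B C U) (bary A B C V)) 0 0.
Proof.
rewrite /polar_form /circumconic !isogE {1}/bary mulmxDr isog_baryD !mulmxA.
by rewrite !mulmx_rowcol3 !mxE; ring.
Qed.

Lemma conic_conjugate_circumconic l U V :
  conic_conjugate (circumconic A B C l) U V ->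
  on_line (T *m psi_polar (bary A B C U) (bary A B C V)) l.
Proof. by rewrite /conic_conjugate /on_line polar_form_circumconic mulmxA. Qed.

Lemma tri_unitmx : T \in unitmx.
Proof. by rewrite unitmxE unitfE. Qed.

Lemma tri_baryK X : T *m bary A B C X = X.
Proof. by rewrite /bary mulmxA mulmxV ?tri_unitmx // mul1mx. Qed.

Lemma bary_triK z : bary A B C (T *m z) = z.
Proof. by rewrite /bary mulmxA mulVmx ?tri_unitmx // mul1mx. Qed.

Lemma on_line_bary X l : on_line X l -> ((l *m T) *m bary A B C X) 0 0 = 0.
Proof. by rewrite -mulmxA tri_baryK. Qed.

End Triangle.

Theorem proposition3p3 (R : realFieldType) (A B C : R * R)
    (l1 l2 : 'rV[R]_3) (X Y P : 'cV[R]_3) :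
  is_triangle A B C ->
  l1 != 0 -> l2 != 0 ->
  conic_nondeg (circumconic A B C l1) ->
  X != 0 -> Y != 0 ->
  on_line X l1 -> on_line Y l1 ->
  isog A B C X != 0 -> isog A B C Y != 0 ->
  conic_conjugate (circumconic A B C l2) X Y ->
  is_pole_wrt (circumconic A B C l1) l2 P ->
  pcollinear3 (isog A B C X) (isog A B C Y) P.
Proof.
move=> ABC l1_neq0 _ _ _ _ onX onY _ _ /conic_conjugate_circumconic Ql2 pole.
have m_neq0 : l1 *m tri_mx A B C != 0.
  by apply: contraNneq l1_neq0 => m0; rewrite -(mulmxK (tri_unitmx ABC) l1) m0 mul0mx.
have := pole_conjugate pole Ql2.
rewrite /conic_conjugate polar_form_circumconic bary_triK // => PQ.
rewrite -(tri_baryK ABC P) !isogE; apply: pcollinear3_mulmx; apply/pcollinear3_join.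
apply: join_isog_bary_eq0 m_neq0 (on_line_bary ABC onX) (on_line_bary ABC onY) PQ.
by rewrite pnatr_eq0.
Qed.
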